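(* Let $(X,\perp,Y,T)$ be an implicative frame. Then the operation $\blacktriangleright:\mathcal{G}(X)\times\mathcal{G}(Y)\to\mathcal{G}(Y)$ distributes over arbitrary joins of Galois sets in each argument place: for any families $A_i\in\mathcal{G}(X)$ ($i\in I$) and $B_j\in\mathcal{G}(Y)$ ($j\in J$), $\left(\bigvee_{i\in I}A_i\right)\blacktriangleright\left(\bigvee_{j\in J}B_j\right)=\bigvee_{i\in I,j\in J}(A_i\blacktriangleright B_j)$.
   Context: A sorted frame (polarity) is a triple $(X,\perp,Y)$ with $X,Y$ nonempty sets and ${\perp}\subseteq X\times Y$. For $U\subseteq X$ let $U'=\{y\in Y:\forall x\in U\ x\perp y\}$, and for $V\subseteq Y$ let ${}'V=\{x\in X:\forall y\in V\ x\perp y\}$. $A\subseteq X$ is stable if $A={}'(A')$; $B\subseteq Y$ is co-stable if $B=({}'B)'$. $\mathcal{G}(X)$, $\mathcal{G}(Y)$ are the complete lattices of stable, resp. co-stable, sets under inclusion (meets are intersections; the join of a family is the closure of its union, where the closure of $W\subseteq X$ is ${}'(W')$ and of $W\subseteq Y$ is $W''=({}'W)'$). Preorders: for $x,z\in X$, $x\le z$ iff $\{x\}'\subseteq\{z\}'$; for $y,v\in Y$, $y\le v$ iff ${}'\{y\}\subseteq{}'\{v\}$; the frame is separated if both are partial orders. $\Gamma u$ is the set of elements (of the same sort) above $u$. For $T\subseteq Y\times X\times Y$ (write $yTxv$), its Galois dual $T'\subseteq X\times X\times Y$ is given by $uT'xv$ iff $\forall y\in Y\,(yTxv\Rightarrow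 u\perp y)$. An implicative frame is $(X,\perp,Y,T)$ with $T\subseteq Y\times X\times Y$ such that: (F0) for all $x\in X,y\in Y$: $x\perp y$ iff $uT'xy$ for all $u\in X$; (F1) the frame is separated; (F2) for all $x\in X,v\in Y$ the set $\{y\in Y: yTxv\}$ equals $\Gamma w$ for some $w\in Y$; (F3) for each $y\in Y$, if $yTxv$, $x_1\le x$ and $v_1\le v$ then $yTx_1v_1$; (F4) for all $u,x\in X$ and $v\in Y$, the set $\{x_1\in X:uT'x_1v\}$ is stable and the set $\{v_1\in Y:uT'xv_1\}$ is co-stable. For $A\in\mathcal{G}(X)$, $B\in\mathcal{G}(Y)$ define $A\blacktriangleright B=\left(\{y\in Y:\exists x\in A\,\exists v\in B\ yTxv\}\right)''$. *)

Definition set_eq {A : Type} (P Q : A -> Prop) : Prop := forall a, P a <-> Q a.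

Section Polarity.
Context {X Y : Type} (perp : X -> Y -> Prop).

Definition rperp (U : X -> Prop) : Y -> Prop := fun y => forall x, U x -> perp x y.
Definition lperp (V : Y -> Prop) : X -> Prop := fun x => forall y, V y -> perp x y.

Definition stable (A : X -> Prop) : Prop := set_eq A (lperp (rperp A)).
Definition costable (B : Y -> Prop) : Prop := set_eq B (rperp (lperp B)).

Definition leX (x z : X) : Prop := forall y, perp x y -> perp z y.
Definition leY (y v : Y) : Prop := forall x, perp x y -> perp x v.

Definition separated : Prop :=
  (forall x z, leX x z -> leX z x -> x = z) /\ (forall y v, leY y v -> leY v y -> y = v).

Definition GammaY (w : Y) : Y -> Prop := fun y => leY w y.

Definition Tdual (T : Y -> X -> Y -> Prop) (u x : X) (v : Y) : Prop :=
  forall y, T y x v -> perp u y.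

(* joins in G(X) and G(Y): closures of unions *)
Definition joinX {I : Type} (F : I -> X -> Prop) : X -> Prop :=
  lperp (rperp (fun x => exists i, F i x)).
Definition joinY {I : Type} (F : I -> Y -> Prop) : Y -> Prop :=
  rperp (lperp (fun y => exists i, F i y)).

Definition imp (T : Y -> X -> Y -> Prop) (A : X -> Prop) (B : Y -> Prop) : Y -> Prop :=
  rperp (lperp (fun y => exists x v, A x /\ B v /\ T y x v)).

Definition implicative_frame (T : Y -> X -> Y -> Prop) : Prop :=
  inhabited X /\ inhabited Y /\
  (forall x y, perp x y <-> forall u, Tdual T u x y) /\
  separated /\
  (forall x v, exists w, set_eq (fun y => T y x v) (GammaY w)) /\
  (forall y x v x1 v1, T y x v -> leX x1 x -> leY v1 v -> T y x1 v1) /\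
  (forall u x v, stable (fun x1 => Tdual T u x1 v) /\ costable (fun v1 => Tdual T u x v1)).

End Polarity.


(* Since [A ▶ B] is the closure of a set [W(A, B)], an element [u] is
   orthogonal to [A ▶ B] exactly when [u T' x v] for all [x ∈ A], [v ∈ B].
   Axiom F4 says that for fixed [u] the sections of [T'] are stable resp.
   co-stable, so this condition passes from the unions of the [A_i] and
   [B_j] to their closures, one argument at a time.  The reverse inclusion
   is monotonicity of [▶]. *)

Section Polarity.
Context {X Y : Type} (perp : X -> Y -> Prop).

Lemma lperp_antitone (V W : Y -> Prop) :
  (forall y, V y -> W y) -> forall x, lperp perp W x -> lperp perp V x.
Proof. intros HVW x Hx y Hy. exact (Hx y (HVW y Hy)). Qed.

Lemma rperp_antitone (U U' : X -> Prop) :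
  (forall x, U x -> U' x) -> forall y, rperp perp U' y -> rperp perp U y.
Proof. intros HU y Hy x Hx. exact (Hy x (HU x Hx)). Qed.

Lemma lperp_rperp_extensive (U : X -> Prop) x : U x -> lperp perp (rperp perp U) x.
Proof. intros Hx y Hy. exact (Hy x Hx). Qed.

Lemma rperp_lperp_extensive (V : Y -> Prop) y : V y -> rperp perp (lperp perp V) y.
Proof. intros Hy x Hx. exact (Hx y Hy). Qed.

Lemma lperp_closure (V : Y -> Prop) x :
  lperp perp (rperp perp (lperp perp V)) x <-> lperp perp V x.
Proof.
  split.
  - apply lperp_antitone, rperp_lperp_extensive.
  - apply lperp_rperp_extensive.
Qed.

Lemma stable_closure_sub (S U : X -> Prop) :
  stable perp S -> (forall x, U x -> S x) ->
  forall x, lperp perp (rperp perp U) x -> S x.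
Proof.
  intros HS HUS x Hx. apply (proj2 (HS x)).
  revert x Hx. apply lperp_antitone, rperp_antitone.
  exact HUS.
Qed.

Lemma costable_closure_sub (S V : Y -> Prop) :
  costable perp S -> (forall y, V y -> S y) ->
  forall y, rperp perp (lperp perp V) y -> S y.
Proof.
  intros HS HVS y Hy. apply (proj2 (HS y)).
  revert y Hy. apply rperp_antitone, lperp_antitone.
  exact HVS.
Qed.

Lemma costable_rperp (U : X -> Prop) : costable perp (rperp perp U).
Proof.
  intro y. split.
  - apply rperp_lperp_extensive.
  - apply rperp_antitone, lperp_rperp_extensive.
Qed.

Variable T : Y -> X -> Y -> Prop.

Lemma imp_monotone (A A' : X -> Prop) (B B' : Y -> Prop) :
  (forall x, A x -> A' x) -> (forall v, B v -> B' v) ->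
  forall y, imp perp T A B y -> imp perp T A' B' y.
Proof.
  intros HA HB. apply rperp_antitone, lperp_antitone.
  intros y (x & v & Hx & Hv & HT). exists x, v. auto.
Qed.

Lemma lperp_imp (A : X -> Prop) (B : Y -> Prop) u :
  lperp perp (imp perp T A B) u <->
  (forall x v, A x -> B v -> Tdual perp T u x v).
Proof.
  unfold imp. split.
  - intros Hu x v Hx Hv y HT. apply (proj1 (lperp_closure _ u) Hu).
    exists x, v. auto.
  - intros Hu. apply lperp_closure.
    intros y (x & v & Hx & Hv & HT). exact (Hu x v Hx Hv y HT).
Qed.

Hypothesis Tdual_sections_closed : forall u x v,
  stable perp (fun x1 => Tdual perp T u x1 v) /\
  costable perp (fun v1 => Tdual perp T u x v1).

Lemma Tdual_joins {I J : Type} (A : I -> X -> Prop) (B : J -> Y -> Prop) u :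
  (forall i j x v, A i x -> B j v -> Tdual perp T u x v) ->
  forall x v, joinX perp A x -> joinY perp B v -> Tdual perp T u x v.
Proof.
  intros Hu x v Hx Hv.
  pose proof (proj2 (Tdual_sections_closed u x v)) as Hcostable.
  revert v Hv. apply costable_closure_sub; [exact Hcostable |].
  intros v [j Hv]. clear Hcostable.
  pose proof (proj1 (Tdual_sections_closed u x v)) as Hstable.
  revert x Hx. apply stable_closure_sub; [exact Hstable |].
  intros x [i Hx]. exact (Hu i j x v Hx Hv).
Qed.

Lemma imp_distr_joins {I J : Type} (A : I -> X -> Prop) (B : J -> Y -> Prop) :
  set_eq (imp perp T (joinX perp A) (joinY perp B))
         (joinY perp (fun p : I * J => imp perp T (A (fst p)) (B (snd p)))).
Proof.
  intro y. split.
  - intros Hy u Hu. apply (rperp_lperp_extensive _ y Hy u).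
    apply lperp_imp, Tdual_joins.
    intros i j. apply lperp_imp.
    revert u Hu. apply lperp_antitone. intros z Hz. exists (i, j). exact Hz.
  - apply costable_closure_sub; [apply costable_rperp |].
    intros z [[i j] Hz]. revert z Hz. apply imp_monotone.
    + intros x Hx. apply lperp_rperp_extensive. exists i. exact Hx.
    + intros v Hv. apply rperp_lperp_extensive. exists j. exact Hv.
Qed.

End Polarity.

Theorem lemma3p4 (X Y : Type) (perp : X -> Y -> Prop) (T : Y -> X -> Y -> Prop)
  (HF : implicative_frame perp T)
  (I J : Type) (A : I -> X -> Prop) (B : J -> Y -> Prop)
  (HA : forall i, stable perp (A i)) (HB : forall j, costable perp (B j)) :
  set_eq (imp perp T (joinX perp A) (joinY perp B))
         (joinY perp (fun p : I * J => imp perp T (A (fst p)) (B (snd p)))).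
Proof.
  destruct HF as (_ & _ & _ & _ & _ & _ & F4).
  exact (imp_distr_joins perp T F4 A B).
Qed.
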